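(* Let $(Z_n)_{n\ge0}$ be a linear fractional Galton–Watson process in i.i.d. random environment (as in the context) which is subcritical, i.e. $R^{(-1)}_\infty<\infty=R_\infty$ a.s. Then $$\Pi_n\,\mathbf{P}^{(n:1)}(Z_n>0)=\frac{1}{\mathbf{E}^{(n:1)}(Z_n\mid Z_n>0)}\ \xrightarrow{n\to\infty}\ \frac{1}{1+R^{(-1)}_\infty}\quad\text{a.s.},$$ and $$\Big\|\mathbf{P}^{(n:1)}(Z_n\in\cdot\mid Z_n>0)-\mathrm{Geom}_+\Big(\frac{1}{1+R^{(-1)}_\infty}\Big)\Big\|\ \xrightarrow{n\to\infty}\ 0\quad\text{a.s.},$$ where $\|\cdot\|$ is the total variation norm.
   Context: Let $(A_n,B_n)_{n\ge1}$ be i.i.d. copies of $(A,B)$ with $\mathbb{P}(A>0,B>0,A+B\ge1)=1$; $e_n=(A_n,B_n)$, $\mathbf{e}=(e_n)_{n\ge1}$. For $a,b>0$, $a+b\ge1$, $LF(a,b)$ is the distribution on $\mathbb{N}_0$ whose generating function $f$ satisfies $1/(1-f(s))=a/(1-s)+b$ for $s\in[0,1)$; equivalently $LF(a,b)=\frac{a+b-1}{a+b}\delta_0+\frac{1}{a+b}\mathrm{Geom}_+(\frac{a}{a+b})$, where $\mathrm{Geom}_+(p)$ is the geometric law on $\{1,2,\dots\}$ with weights $p(1-p)^{k-1}$. $(Z_n)_{n\ge0}$, $Z_0=1$, is a Galton–Watson process in random environment: given $\mathbf{e}$, each individual of generation $n-1$ independently has offspring distribution $LF(A_n,B_n)$.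 $\Pi_0=1$, $\Pi_n=\prod_{k=1}^nA_k$, $R_n=\sum_{k=1}^n\Pi_{k-1}B_k$, $R_\infty=\lim R_n$, $R^{(-1)}_n=\sum_{k=1}^n\Pi_k^{-1}B_k$, $R^{(-1)}_\infty=\lim R^{(-1)}_n$. $\mathbf{P}^{(n:1)},\mathbf{E}^{(n:1)}$ denote the quenched probability/expectation for the process run in the reversed environment $(e_n,e_{n-1},\dots,e_1)$ up to time $n$, i.e. given $(e_1,\dots,e_n)$, individuals of generation $k-1$ ($1\le k\le n$) have offspring law $LF(A_{n-k+1},B_{n-k+1})$. *)

From HB Require Import structures.
From mathcomp Require Import all_boot all_order all_algebra.
From mathcomp Require Import all_classical all_reals all_analysis.
Set Implicit Arguments. Unset Strict Implicit. Unset Printing Implicit Defensive.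
Import Order.TTheory GRing.Theory Num.Theory.
Import numFieldNormedType.Exports.
Local Open Scope classical_set_scope.
Local Open Scope ring_scope.

Section Defs.
Variable R : realType.

Definition geomP (p : R) (k : nat) : R :=
  if k == 0%N then 0 else p * (1 - p) ^+ k.-1.

Definition LF (a b : R) (k : nat) : R :=
  (if k == 0%N then (a + b - 1) / (a + b) else 0)
  + (a + b)^-1 * geomP (a / (a + b)) k.

Fixpoint convn (q : nat -> R) (i : nat) : nat -> R :=
  match i with
  | 0%N => fun j => if j == 0%N then 1 else 0
  | i'.+1 => fun j => \sum_(m < j.+1) convn q i' m * q (j - m)%N
  end.

(* Quenched law of Z_k (Z_0 = 1) when individuals of generation k-1
   (k >= 1) have offspring law offs k. *)
Fixpoint gw_law (offs : nat -> nat -> R) (k : nat) : nat -> R :=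
  match k with
  | 0%N => fun j => if j == 1%N then 1 else 0
  | k'.+1 => fun j =>
      fine (\sum_(0 <= i <oo) ((gw_law offs k' i * convn (offs k) i j)%:E))%E
  end.

(* Reversed environment (e_n, ..., e_1): generation k-1 uses LF(A_{n-k+1},B_{n-k+1}) *)
Definition rev_offs (a b : nat -> R) (n : nat) : nat -> nat -> R :=
  fun k => LF (a (n - k + 1)%N) (b (n - k + 1)%N).

Definition law_rev (a b : nat -> R) (n : nat) : nat -> R :=
  gw_law (rev_offs a b n) n.

Definition surv_rev (a b : nat -> R) (n : nat) : R := 1 - law_rev a b n 0.

Definition condmean_rev (a b : nat -> R) (n : nat) : R :=
  fine (\sum_(0 <= j <oo) ((j%:R * law_rev a b n j)%:E))%E / surv_rev a b n.

Definition condlaw_rev (a b : nat -> R) (n : nat) (j : nat) : R :=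
  if j == 0%N then 0 else law_rev a b n j / surv_rev a b n.

(* total variation distance (as l^1 norm of the difference) *)
Definition tv (p q : nat -> R) : \bar R :=
  (\sum_(0 <= j <oo) (`|p j - q j|%:E))%E.

Definition Pi (a : nat -> R) (n : nat) : R := \prod_(1 <= k < n.+1) a k.
Definition Rn (a b : nat -> R) (n : nat) : R :=
  \sum_(1 <= k < n.+1) Pi a k.-1 * b k.
Definition Rinv (a b : nat -> R) (n : nat) : R :=
  \sum_(1 <= k < n.+1) (Pi a k)^-1 * b k.
Definition Rinv_inf (a b : nat -> R) : R := limn (Rinv a b).

End Defs.

Definition iid_seq (d : measure_display) (T : measurableType d) (R : realType)
  (P : probability T R) (e : nat -> T -> R * R) : Prop :=
  (forall n, (1 <= n)%N -> measurable_fun setT (e n)) /\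
  (forall n (S : set (R * R)), (1 <= n)%N -> measurable S ->
      P (e n @^-1` S) = P (e 1%N @^-1` S)) /\
  (forall (I : seq nat) (S : nat -> set (R * R)),
      uniq I -> all (fun i => (1 <= i)%N) I ->
      (forall i, i \in I -> measurable (S i)) ->
      P (\bigcap_(i in [set i | i \in I]) (e i @^-1` S i)) =
      (\prod_(i <- I) P (e i @^-1` S i))%E).

From HB Require Import structures.
From mathcomp Require Import all_boot all_order all_algebra.
From mathcomp Require Import all_classical all_reals all_analysis.
From mathcomp Require Import ring lra zify.
Set Implicit Arguments. Unset Strict Implicit. Unset Printing Implicit Defensive.
Import Order.TTheory GRing.Theory Num.Theory.
Import numFieldNormedType.Exports.
Local Open Scope classical_set_scope.
Local Open Scope ring_scope.

(* Linear fractional laws are stable under composition: if Z ~ LF(al, be) and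
   every individual reproduces independently according to LF(a, b), the next
   generation is LF(al a, al b + be), because 1/(1 - f) is affine in 1/(1 - s).
   Hence in the environment (e_1, ..., e_n) the law of Z_n is LF(Pi_n, R_n), and
   reversing the environment turns R_n into Pi_n R^(-1)_n.  So the survival
   probability under P^(n:1) is 1/(Pi_n (1 + R^(-1)_n)), the law of Z_n given
   survival is exactly Geom_+(1/(1 + R^(-1)_n)), with mean 1 + R^(-1)_n, and
   everything converges once R^(-1)_n does, since the total variation distance
   between Geom_+(r) and Geom_+(p) is at most 2|r - p|/r.  Without generating
   functions, the composition rule is obtained by checking that both laws solve
   the same renewal equation, which has a unique solution. *)

Section LinearFractional.
Context {R : realType}.
Implicit Types (a b u : R).

Lemma geometric_partial_sum u N : \sum_(k < N) u ^+ k * (1 - u) = 1 - u ^+ N.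
Proof.
elim: N => [|N IH]; first by rewrite big_ord0 expr0 subrr.
by rewrite big_ord_recr /= IH exprS; ring.
Qed.

Lemma LF0 a b : LF a b 0 = (a + b - 1) / (a + b).
Proof. by rewrite /LF /geomP /= mulr0 addr0. Qed.

Lemma LFS a b k : a + b != 0 ->
  LF a b k.+1 = a / (a + b) ^+ 2 * (b / (a + b)) ^+ k.
Proof.
move=> ab; rewrite /LF /geomP /= add0r.
have -> : 1 - a / (a + b) = b / (a + b) by field.
by rewrite mulrA; congr (_ * _); field.
Qed.

Lemma LF10 : LF (1 : R) 0 = fun j => if j == 1%N then 1 else 0.
Proof.
apply: boolp.funext => -[|j]; first by rewrite LF0 addr0 subrr mul0r.
rewrite LFS ?addr0 ?oner_neq0 // mul0r expr1n divr1 mul1r.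
by case: j => [|j]; rewrite ?expr0 // exprS mul0r.
Qed.

Lemma LF_ge0 a b k : 0 <= a -> 0 <= b -> 1 <= a + b -> 0 <= LF a b k.
Proof.
move=> a_ge0 b_ge0 ab_ge1; have ab_gt0 : 0 < a + b by lra.
case: k => [|k]; first by rewrite LF0 divr_ge0 //; lra.
by rewrite LFS ?gt_eqF // mulr_ge0 ?exprn_ge0 ?divr_ge0 ?exprn_ge0 // ltW.
Qed.

Lemma LF_sum_le1 a b N : 0 <= b -> 1 <= a + b -> \sum_(j < N) LF a b j <= 1.
Proof.
move=> b_ge0 ab_ge1; have ab_gt0 : 0 < a + b by lra.
case: N => [|N]; first by rewrite big_ord0.
rewrite big_ord_recl LF0.
under eq_bigr do rewrite /bump /= LFS ?gt_eqF //.
have -> : \sum_(i < N) a / (a + b) ^+ 2 * (b / (a + b)) ^+ i =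
   (a + b)^-1 * \sum_(i < N) (b / (a + b)) ^+ i * (1 - b / (a + b)).
  by rewrite mulr_sumr; apply: eq_bigr => i _; field; rewrite gt_eqF.
rewrite geometric_partial_sum.
have : 0 <= (a + b)^-1 * (b / (a + b)) ^+ N.
  by rewrite mulr_ge0 ?invr_ge0 ?exprn_ge0 ?divr_ge0 // ltW.
suff -> : (a + b - 1) / (a + b) + (a + b)^-1 * (1 - (b / (a + b)) ^+ N)
  = 1 - (a + b)^-1 * (b / (a + b)) ^+ N by lra.
by field; rewrite gt_eqF.
Qed.

Section Convolution.
Variable q : nat -> R.
Hypotheses (q_ge0 : forall k, 0 <= q k) (q_sum_le1 : forall N, \sum_(j < N) q j <= 1).

Lemma convn1 j : convn q 1 j = q j.
Proof.
rewrite /= big_ord_recl /= mul1r subn0 big1 ?addr0 // => i _.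
by rewrite /bump /= add1n mul0r.
Qed.

Lemma convn_ge0 i j : 0 <= convn q i j.
Proof.
elim: i j => [|i IH] j; first by rewrite /=; case: (j == 0%N).
by apply: sumr_ge0 => m _; rewrite mulr_ge0.
Qed.

Lemma sum_convolution (c : nat -> R) N :
  \sum_(j < N) \sum_(m < j.+1) c m * q (j - m)%N =
  \sum_(m < N) c m * \sum_(l < N - m) q l.
Proof.
elim: N => [|N IH]; first by rewrite !big_ord0.
rewrite big_ord_recr /= IH [RHS]big_ord_recr /= subSnn big_ord1.
rewrite [X in _ = X + _](eq_bigr (fun m : 'I_N => c m * \sum_(l < N - m) q l
    + c m * q (N - m)%N)); last first.
  move=> m _; rewrite /= subSn; last exact: ltnW (ltn_ord m).
  by rewrite big_ord_recr /= mulrDr.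
rewrite big_split /= [X in _ + X = _]big_ord_recr /= subnn; ring.
Qed.

Lemma convn_sum_le1 i N : \sum_(j < N) convn q i j <= 1.
Proof.
elim: i N => [|i IH] N.
  case: N => [|N]; first by rewrite big_ord0.
  by rewrite big_ord_recl /= big1 ?addr0.
rewrite /= sum_convolution; apply: le_trans (IH N).
apply: ler_sum => m _; rewrite -[X in _ <= X]mulr1.
by apply: ler_wpM2l; [exact: convn_ge0 | exact: q_sum_le1].
Qed.

Lemma convn_le1 i j : convn q i j <= 1.
Proof.
apply: le_trans (convn_sum_le1 i j.+1).
by rewrite big_ord_recr /= lerDr; apply: sumr_ge0 => k _; exact: convn_ge0.
Qed.

End Convolution.
End LinearFractional.

Section Renewal.
Context {R : realType}.

Lemma renewal_uniq (K q x y : nat -> R) (s : R) : s * q 0%N != 1 ->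
  (forall j, x j = K j + s * \sum_(m < j.+1) q (j - m)%N * x m) ->
  (forall j, y j = K j + s * \sum_(m < j.+1) q (j - m)%N * y m) ->
  x =1 y.
Proof.
move=> sq1 hx hy; elim/ltn_ind => j IH.
have e : (1 - s * q 0%N) * (x j - y j) = 0.
  rewrite mulrBl mul1r {1}hx {1}hy !big_ord_recr /= subnn.
  under eq_bigr => m _ do rewrite IH //.
  ring.
move/eqP: e; rewrite mulf_eq0 subr_eq0 eq_sym (negbTE sq1) /=.
by rewrite subr_eq0 => /eqP.
Qed.

Lemma conv_geometric_tailS (q h : nat -> R) u :
  (forall k, q k.+2 = u * q k.+1) -> forall k,
  \sum_(m < k.+3) q (k.+2 - m)%N * h m =
  u * \sum_(m < k.+2) q (k.+1 - m)%N * h m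
  + (q 1%N - u * q 0%N) * h k.+1 + q 0%N * h k.+2.
Proof.
move=> qS k.
rewrite big_ord_recr big_ord_recr /= subnn subSnn [in RHS]big_ord_recr /= subnn.
have -> : \sum_(m < k.+1) q (k.+2 - m)%N * h m =
          u * \sum_(m < k.+1) q (k.+1 - m)%N * h m.
  rewrite mulr_sumr; apply: eq_bigr => m _.
  have mk : (m <= k)%N by rewrite -ltnS.
  by rewrite !subSn ?(leqW mk) // qS mulrA.
ring.
Qed.

Lemma renewal_geometric_solution (q h : nat -> R) (c s u U : R) :
  (forall k, q k.+2 = u * q k.+1) -> (forall k, h k.+2 = U * h k.+1) ->
  U * (1 - s * q 0%N) = u + s * (q 1%N - u * q 0%N) ->
  h 0%N = c * q 0%N + s * (q 0%N * h 0%N) ->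
  h 1%N = c * q 1%N + s * (q 1%N * h 0%N + q 0%N * h 1%N) ->
  forall j, h j = c * q j + s * \sum_(m < j.+1) q (j - m)%N * h m.
Proof.
move=> qS hS hU h0 h1; case=> [|j]; first by rewrite big_ord1 subn0.
elim: j => [|k IH]; first by rewrite big_ord_recr big_ord1.
rewrite (conv_geometric_tailS h qS) hS qS.
have -> : c * (u * q k.+1) + s * (u * \sum_(m < k.+2) q (k.+1 - m)%N * h m
    + (q 1%N - u * q 0%N) * h k.+1 + q 0%N * (U * h k.+1))
  = u * (c * q k.+1 + s * \sum_(m < k.+2) q (k.+1 - m)%N * h m)
    + s * (q 1%N - u * q 0%N) * h k.+1 + s * q 0%N * (U * h k.+1).
  by ring.
rewrite -IH.
apply/eqP; rewrite -subr_eq0; apply/eqP.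
transitivity ((U * (1 - s * q 0%N) - (u + s * (q 1%N - u * q 0%N))) * h k.+1).
  by ring.
by rewrite hU subrr mul0r.
Qed.

End Renewal.

Section Compound.
Context {R : realType}.

Lemma nneseries_recS (f : nat -> \bar R) : (forall i, 0 <= f i)%E ->
  (\sum_(0 <= i <oo) f i = f 0%N + \sum_(0 <= i <oo) f i.+1)%E.
Proof.
move=> f_ge0; rewrite nneseries_recl //; congr (_ + _)%E.
by rewrite -(nneseries_addn 1) //; apply: eq_eseriesr => i _; rewrite addn1.
Qed.

Lemma nneseries_fin_le (f : nat -> R) (M : R) : (forall i, 0 <= f i) ->
  (forall N, \sum_(i < N) f i <= M) -> (\sum_(0 <= i <oo) (f i)%:E <= M%:E)%E.
Proof.
move=> f_ge0 fM; apply: lime_le.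
  by apply: is_cvg_nneseries => n _ _; rewrite lee_fin.
by apply: nearW => N; rewrite sumEFin lee_fin big_mkord.
Qed.

(* [gw_law offs k.+1] unfolds to [compound (gw_law offs k) (offs k.+1)]. *)
Definition compound (w q : nat -> R) (j : nat) : R :=
  fine (\sum_(0 <= i <oo) ((w i * convn q i j)%:E))%E.

Variables w q : nat -> R.
Hypotheses (w_ge0 : forall k, 0 <= w k) (w_sum_le1 : forall N, \sum_(j < N) w j <= 1).
Hypotheses (q_ge0 : forall k, 0 <= q k) (q_sum_le1 : forall N, \sum_(j < N) q j <= 1).

Let tail j := (\sum_(0 <= i <oo) ((w i.+1 * convn q i.+1 j)%:E))%E.

Let tail_fin_num j : tail j \is a fin_num.
Proof.
rewrite ge0_fin_numE; last by apply: nneseries_ge0 => i _ _; rewrite lee_fin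
  mulr_ge0 ?convn_ge0.
apply: le_lt_trans (ltry 1); apply: nneseries_fin_le => [i|N].
  by rewrite mulr_ge0 ?convn_ge0.
apply: le_trans (w_sum_le1 N.+1); rewrite big_ord_recl -[X in X <= _]add0r.
apply: lerD => //; apply: ler_sum => i _.
by rewrite ler_piMr ?convn_le1.
Qed.

Let compound_tail j : compound w q j = w 0%N * (j == 0%N)%:R + fine (tail j).
Proof.
rewrite /compound nneseries_recS; last by move=> i; rewrite lee_fin
  mulr_ge0 ?convn_ge0.
rewrite -/(tail j) -(fineK (tail_fin_num j)) -EFinD /=.
by case: j.
Qed.

(* Splitting the last copy of q off [convn q i.+2] and using w i.+2 = rho w i.+1. *)
Lemma compound_renewal (rho : R) : 0 <= rho -> (forall k, w k.+2 = rho * w k.+1) ->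
  let g j := compound w q j - w 0%N * (j == 0%N)%:R in
  forall j, g j = w 1%N * q j + rho * \sum_(m < j.+1) q (j - m)%N * g m.
Proof.
move=> rho_ge0 wS g j; have gE m : g m = fine (tail m) by rewrite /g compound_tail addrC addKr.
rewrite gE; apply: EFin_inj; rewrite fineK // /tail nneseries_recS; last first.
  by move=> i; rewrite lee_fin mulr_ge0 ?convn_ge0.
rewrite convn1 EFinD; congr (_ + _)%E.
transitivity (\sum_(0 <= i <oo) (\sum_(m < j.+1)
    ((rho * q (j - m)%N) * (w i.+1 * convn q i.+1 m))%:E))%E.
  apply: eq_eseriesr => i _; rewrite sumEFin; congr (_%:E).
  by rewrite wS /= mulr_sumr; apply: eq_bigr => m _; ring.
rewrite nneseries_sum; last first.
  by move=> m i _; rewrite lee_fin !mulr_ge0 ?convn_ge0.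
rewrite mulr_sumr -sumEFin; apply: eq_bigr => m _.
under eq_eseriesr do rewrite EFinM.
rewrite nneseriesZl; last by move=> i _; rewrite lee_fin mulr_ge0 ?convn_ge0.
by rewrite -/(tail m) -(fineK (tail_fin_num m)) -EFinM gE mulrA.
Qed.

End Compound.

Section Composition.
Context {R : realType}.

Lemma LF_compose_renewal (al be a b : R) :
  al + be != 0 -> a + b != 0 -> al * a + (al * b + be) != 0 ->
  let h j := LF (al * a) (al * b + be) j - LF al be 0 * (j == 0%N)%:R in
  forall j, h j = LF al be 1 * LF a b j
                  + be / (al + be) * \sum_(m < j.+1) LF a b (j - m)%N * h m.
Proof.
move=> albe_neq0 ab_neq0 AB_neq0 h.
apply: (renewal_geometric_solution (u := b / (a + b))
         (U := (al * b + be) / (al * a + (al * b + be)))).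
- by move=> k; rewrite !LFS // [(_ / _) ^+ k.+1]exprS; ring.
- by move=> k; rewrite /h !LFS //= !mulr0 !subr0 [(_ / _) ^+ k.+1]exprS; ring.
- by rewrite LF0 LFS //; field; rewrite ab_neq0 albe_neq0 AB_neq0.
- by rewrite /h !LF0 LFS //= !mulr1; field; rewrite ab_neq0 albe_neq0 AB_neq0.
- by rewrite /h !LF0 !LFS //= !mulr1 mulr0 subr0; field;
    rewrite ab_neq0 albe_neq0 AB_neq0.
Qed.

Lemma LF_compose (al be a b : R) : 0 < al -> 0 <= be -> 1 <= al + be ->
  0 < a -> 0 <= b -> 1 <= a + b ->
  compound (LF al be) (LF a b) = LF (al * a) (al * b + be).
Proof.
move=> al_gt0 be_ge0 albe_ge1 a_gt0 b_ge0 ab_ge1.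
have albe_neq0 : al + be != 0 by rewrite gt_eqF //; lra.
have ab_neq0 : a + b != 0 by rewrite gt_eqF //; lra.
have AB_neq0 : al * a + (al * b + be) != 0.
  by rewrite gt_eqF // ltr_pwDl ?mulr_gt0 // addr_ge0 ?mulr_ge0 // ltW.
have w_ge0 k : 0 <= LF al be k by apply: LF_ge0 => //; exact: ltW.
have w_sum_le1 N : \sum_(j < N) LF al be j <= 1 by exact: LF_sum_le1.
have q_ge0 k : 0 <= LF a b k by apply: LF_ge0 => //; exact: ltW.
have q_sum_le1 N : \sum_(j < N) LF a b j <= 1 by exact: LF_sum_le1.
have rho_ge0 : 0 <= be / (al + be) by rewrite divr_ge0 //; lra.
have wS k : LF al be k.+2 = be / (al + be) * LF al be k.+1.
  by rewrite !LFS // [(_ / _) ^+ k.+1]exprS; ring.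
have rho_q0 : be / (al + be) * LF a b 0 != 1.
  have q0_le1 : LF a b 0 <= 1 by have := q_sum_le1 1%N; rewrite big_ord1.
  rewrite lt_eqF // (@le_lt_trans _ _ (be / (al + be))) ?ler_piMr //.
  by rewrite ltr_pdivrMr; lra.
apply: boolp.funext => j.
have := renewal_uniq rho_q0
  (compound_renewal w_ge0 w_sum_le1 q_ge0 q_sum_le1 rho_ge0 wS)
  (LF_compose_renewal albe_neq0 ab_neq0 AB_neq0) j.
by move/(congr1 (+%R^~ (LF al be 0 * (j == 0%N)%:R))); rewrite !subrK.
Qed.

End Composition.

Section Environment.
Context {R : realType}.
Implicit Types a b : nat -> R.

Definition LF_env a b : Prop :=
  forall k, (0 < k)%N -> [/\ 0 < a k, 0 <= b k & 1 <= a k + b k].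

Lemma Pi0 a : Pi a 0 = 1.
Proof. by rewrite /Pi big_geq. Qed.

Lemma PiS a n : Pi a n.+1 = Pi a n * a n.+1.
Proof. by rewrite /Pi big_nat_recr. Qed.

Lemma Rn0 a b : Rn a b 0 = 0.
Proof. by rewrite /Rn big_geq. Qed.

Lemma RnS a b n : Rn a b n.+1 = Rn a b n + Pi a n * b n.+1.
Proof. by rewrite /Rn big_nat_recr. Qed.

Lemma Rinv0 a b : Rinv a b 0 = 0.
Proof. by rewrite /Rinv big_geq. Qed.

Lemma RinvS a b n : Rinv a b n.+1 = Rinv a b n + (Pi a n.+1)^-1 * b n.+1.
Proof. by rewrite /Rinv big_nat_recr. Qed.

Lemma Pi_gt0 a n : (forall k, (0 < k)%N -> 0 < a k) -> 0 < Pi a n.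
Proof.
move=> a_gt0; elim: n => [|n IH]; first by rewrite Pi0.
by rewrite PiS mulr_gt0 // a_gt0.
Qed.

Lemma Rinv_ge0 a b n : LF_env a b -> 0 <= Rinv a b n.
Proof.
move=> env; elim: n => [|n IH]; first by rewrite Rinv0.
have [a_gt0 b_ge0 _] := env n.+1 isT.
have Pi_pos : 0 < Pi a n.+1 by apply: Pi_gt0 => k /env[].
by rewrite RinvS addr_ge0 // mulr_ge0 // invr_ge0 ltW.
Qed.

Lemma LF_env_Rn a b n : LF_env a b -> 0 <= Rn a b n /\ 1 <= Pi a n + Rn a b n.
Proof.
move=> env; elim: n => [|n [Rn_ge0 PiRn_ge1]].
  by rewrite Pi0 Rn0 addr0.
have [a_gt0 b_ge0 ab_ge1] := env n.+1 isT.
have Pi_pos : 0 < Pi a n by apply: Pi_gt0 => k /env[].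
rewrite PiS RnS; split; first by rewrite addr_ge0 // mulr_ge0 // ltW.
have : Pi a n <= Pi a n * (a n.+1 + b n.+1) by rewrite ler_peMr // ltW.
lra.
Qed.

Lemma gw_law_LF a b n : LF_env a b ->
  gw_law (fun k => LF (a k) (b k)) n = LF (Pi a n) (Rn a b n).
Proof.
move=> env; elim: n => [|n IH]; first by rewrite Pi0 Rn0 LF10.
have [a_gt0 b_ge0 ab_ge1] := env n.+1 isT.
have [Rn_ge0 PiRn_ge1] := LF_env_Rn n env.
have Pi_pos : 0 < Pi a n by apply: Pi_gt0 => k /env[].
rewrite -[LHS]/(compound (gw_law _ n) _) IH LF_compose //.
by rewrite PiS RnS addrC.
Qed.

Lemma LF_env_rev a b n : LF_env a b ->
  LF_env (fun k => a (n - k + 1)%N) (fun k => b (n - k + 1)%N).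
Proof. by move=> env k _; apply: env; rewrite addn1. Qed.

Section Reversal.
Variables (a b : nat -> R) (n : nat).
Hypothesis a_gt0 : forall k, (0 < k)%N -> 0 < a k.

Lemma Pi_rev_prefix j : (j <= n)%N ->
  Pi (fun k => a (n - k + 1)%N) j = Pi a n / Pi a (n - j).
Proof.
elim: j => [|j IH] jn; first by rewrite Pi0 subn0 divff // gt_eqF // Pi_gt0.
have e : (n - j = (n - j.+1).+1)%N by rewrite subnSK.
have Pi_pos : 0 < Pi a (n - j.+1) by exact: Pi_gt0.
have a_pos : 0 < a (n - j) by rewrite a_gt0 // subn_gt0.
rewrite PiS IH ?(ltnW jn) // addn1 -e [in Pi a (n - j)]e PiS -e.
by field; rewrite !gt_eqF.
Qed.

Lemma Pi_rev : Pi (fun k => a (n - k + 1)%N) n = Pi a n.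
Proof. by rewrite Pi_rev_prefix // subnn Pi0 divr1. Qed.

Lemma Rn_rev :
  Rn (fun k => a (n - k + 1)%N) (fun k => b (n - k + 1)%N) n = Pi a n * Rinv a b n.
Proof.
rewrite /Rn /Rinv mulr_sumr big_nat_rev /=; apply: eq_big_nat => k /andP[k1 kn].
rewrite Pi_rev_prefix; last by clear -kn; lia.
have -> : (n - (1 + n.+1 - k.+1).-1 = k)%N by clear -k1 kn; lia.
have -> : (n - (1 + n.+1 - k.+1) + 1 = k)%N by clear -k1 kn; lia.
by rewrite mulrA.
Qed.

End Reversal.

Lemma law_revE a b n : LF_env a b ->
  law_rev a b n = LF (Pi a n) (Pi a n * Rinv a b n).
Proof.
move=> env; have a_gt0 k : (0 < k)%N -> 0 < a k by move/env=> [].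
rewrite /law_rev /rev_offs gw_law_LF; last exact: LF_env_rev.
by rewrite (Pi_rev n a_gt0) (Rn_rev b n a_gt0).
Qed.

Lemma Pi_Rinv_ge1 a b n : LF_env a b -> 1 <= Pi a n + Pi a n * Rinv a b n.
Proof.
move=> env; have a_gt0 k : (0 < k)%N -> 0 < a k by move/env=> [].
have [_] := LF_env_Rn n (LF_env_rev n env).
by rewrite (Pi_rev n a_gt0) (Rn_rev b n a_gt0).
Qed.

End Environment.

Section Geometric.
Context {R : realType}.

Lemma series_nonneg_le_lim (f : R ^nat) l : (forall k, 0 <= f k) ->
  series f @ \oo --> l -> forall N, \sum_(k < N) f k <= l.
Proof.
move=> f_ge0 fl N; rewrite -(cvg_lim _ fl) //.
have mono : nondecreasing_seq (series f).
  by apply: nondecreasing_series => k _ _; exact: f_ge0.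
by have := nondecreasing_cvgn_le mono (cvgP _ fl) N; rewrite /series /= big_mkord.
Qed.

Lemma cvg_expr_series (u : R) : 0 <= u < 1 ->
  series (GRing.exp u) @ \oo --> (1 - u)^-1.
Proof.
move=> /andP[u_ge0 u_lt1]; rewrite exprn_geometric -[X in _ --> X]mul1r.
by apply: cvg_geometric_series; rewrite ger0_norm.
Qed.

Lemma sum_absdiff_expr_le (x y : R) N : 0 <= x < 1 -> 0 <= y < 1 ->
  \sum_(k < N) `|y ^+ k - x ^+ k| <= `|(1 - y)^-1 - (1 - x)^-1|.
Proof.
wlog xy : x y / x <= y.
  move=> H x01 y01; have [xy|/ltW yx] := lerP x y; first exact: H xy x01 y01.
  under eq_bigr do rewrite distrC.
  by rewrite [leRHS]distrC; exact: H yx y01 x01.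
move=> /andP[x_ge0 x_lt1] /andP[y_ge0 y_lt1].
have le_expr k : x ^+ k <= y ^+ k by rewrite lerXn2r // nnegrE.
under eq_bigr => k _ do rewrite ger0_norm ?subr_ge0 ?le_expr //.
apply: le_trans (ler_norm _).
apply: (series_nonneg_le_lim (f := fun k => y ^+ k - x ^+ k)) => [k|].
  by rewrite subr_ge0.
have -> : series (fun k => y ^+ k - x ^+ k) =
          series (GRing.exp y) - series (GRing.exp x).
  by apply: boolp.funext => n; rewrite /series /= sumrB.
by apply: cvgB; apply: cvg_expr_series; apply/andP.
Qed.

Lemma tv_geomP_le (r p : R) : 0 < r <= 1 -> 0 < p <= 1 ->
  (tv (geomP r) (geomP p) <= (2 * `|r - p| / r)%:E)%E.
Proof.
move=> /andP[r_gt0 r_le1] /andP[p_gt0 p_le1].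
apply: nneseries_fin_le => // N.
apply: (@le_trans _ _ (\sum_(j < N.+1) `|geomP r j - geomP p j|)).
  by rewrite big_ord_recr /= lerDl.
rewrite big_ord_recl /geomP /= subrr normr0 add0r.
have v_ge0 : 0 <= 1 - r by lra.
have v01 : 0 <= 1 - r < 1 by rewrite v_ge0; lra.
have u01 : 0 <= 1 - p < 1 by apply/andP; split; lra.
apply: (@le_trans _ _ (\sum_(k < N)
    (`|r - p| * (1 - r) ^+ k + p * `|(1 - r) ^+ k - (1 - p) ^+ k|))).
  apply: ler_sum => k _; rewrite /bump /=.
  have -> : r * (1 - r) ^+ k - p * (1 - p) ^+ k =
    (r - p) * (1 - r) ^+ k + p * ((1 - r) ^+ k - (1 - p) ^+ k) by ring.
  apply: le_trans (ler_normD _ _) _.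
  by rewrite !normrM (ger0_norm (ltW p_gt0)) (ger0_norm (exprn_ge0 k v_ge0)).
rewrite big_split /= -!mulr_sumr.
have geo := series_nonneg_le_lim (fun k => exprn_ge0 k v_ge0) (cvg_expr_series v01) N.
have absdiff := sum_absdiff_expr_le N u01 v01.
rewrite !subKr in geo absdiff.
apply: le_trans (lerD (ler_wpM2l (normr_ge0 _) geo) (ler_wpM2l (ltW p_gt0) absdiff)) _.
have -> : r^-1 - p^-1 = (p - r) / (r * p) by field; rewrite !gt_eqF.
have rp_ge0 : 0 <= (r * p)^-1 by rewrite invr_ge0 mulr_ge0 // ltW.
rewrite normrM (ger0_norm rp_ge0) [`|p - r|]distrC.
by rewrite le_eqVlt; apply/orP; left; apply/eqP; field; rewrite !gt_eqF.
Qed.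

Lemma cvg_tv_geomP (r : R ^nat) (p : R) : (forall n, 0 < r n <= 1) -> 0 < p <= 1 ->
  r @ \oo --> p -> (fun n => tv (geomP (r n)) (geomP p)) @ \oo --> 0%E.
Proof.
move=> r01 p01 rp; have /andP[p_gt0 _] := p01.
apply: (@squeeze_cvge _ _ _ _ (fun=> 0%E) _ (fun n => (2 * `|r n - p| / r n)%:E)).
- apply: nearW => n; rewrite tv_geomP_le // andbT.
  by apply: nneseries_ge0 => j _ _; rewrite lee_fin.
- exact: cvg_cst.
- apply: cvg_EFin; first exact: nearW.
  have -> : 0 = 2 * `|p - p| / p by rewrite subrr normr0 mulr0 mul0r.
  apply: cvgM; last by apply: cvgV; rewrite ?gt_eqF.
  by apply: cvgM; [exact: cvg_cst | apply: cvg_norm; apply: cvgB => //; exact: cvg_cst].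
Qed.

Lemma sum_succ_expr_mul1B (u : R) N :
  \sum_(k < N) k.+1%:R * u ^+ k * (1 - u) = \sum_(k < N) u ^+ k - N%:R * u ^+ N.
Proof.
elim: N => [|N IH]; first by rewrite !big_ord0 mul0r subr0.
by rewrite !big_ord_recr /= IH -natr1 exprS; ring.
Qed.

Lemma cvg_series_succ_expr (u : R) : 0 <= u < 1 ->
  series (fun k => k.+1%:R * u ^+ k) @ \oo --> ((1 - u) ^+ 2)^-1.
Proof.
move=> u01; have /andP[u_ge0 u_lt1] := u01.
have u_neq1 : 1 - u != 0 by rewrite subr_eq0 gt_eqF.
set S := series _.
have SE N : S N = (series (GRing.exp u) N - N%:R * u ^+ N) / (1 - u).
  rewrite /S /series /= !big_mkord -sum_succ_expr_mul1B -mulr_suml.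
  by rewrite mulfK.
have S_cvg : cvgn S.
  apply: nondecreasing_is_cvgn.
    by apply: nondecreasing_series => k _ _; rewrite mulr_ge0 ?exprn_ge0.
  exists ((1 - u)^-1 / (1 - u)) => _ [N _ <-].
  rewrite SE ler_pM2r ?invr_gt0 ?subr_gt0 // /series /= big_mkord.
  have := series_nonneg_le_lim (fun k => exprn_ge0 k u_ge0) (cvg_expr_series u01) N.
  have : 0 <= N%:R * u ^+ N by rewrite mulr_ge0 ?exprn_ge0.
  lra.
have Nu_cvg0 : (fun N => N%:R * u ^+ N) @ \oo --> 0.
  have -> : (fun N => N%:R * u ^+ N) = (fun N => N.+1%:R * u ^+ N - u ^+ N).
    by apply: boolp.funext => N; rewrite -natr1; ring.
  rewrite -[0]subr0; apply: cvgB; first exact: cvg_series_cvg_0 S_cvg.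
  by apply: cvg_expr; rewrite ger0_norm.
rewrite (boolp.funext SE).
have -> : ((1 - u) ^+ 2)^-1 = ((1 - u)^-1 - 0) / (1 - u) by rewrite subr0 -invfM.
by apply: cvgM; [apply: cvgB; [exact: cvg_expr_series | exact: Nu_cvg0] | exact: cvg_cst].
Qed.

Lemma eseries_EFin_lim (f : R ^nat) l : series f @ \oo --> l ->
  (\sum_(0 <= i <oo) (f i)%:E = l%:E)%E.
Proof.
move=> fl; apply: cvg_lim => //; under eq_fun do rewrite sumEFin.
by apply: cvg_EFin fl; exact: nearW.
Qed.

Lemma LF_mean (a b : R) : 0 < a -> 0 <= b -> 1 <= a + b ->
  fine (\sum_(0 <= j <oo) ((j%:R * LF a b j)%:E))%E = a^-1.
Proof.
move=> a_gt0 b_ge0 ab_ge1; have ab_neq0 : a + b != 0 by rewrite gt_eqF //; lra.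
set c := a / (a + b) ^+ 2; set u := b / (a + b).
have u01 : 0 <= u < 1 by rewrite divr_ge0 //= ?ltr_pdivrMr; lra.
rewrite nneseries_recS; last by move=> i; rewrite lee_fin mulr_ge0 ?LF_ge0 // ltW.
rewrite mul0r add0e.
under eq_eseriesr do rewrite LFS // -/c -/u mulrCA.
rewrite (@eseries_EFin_lim _ (c * ((1 - u) ^+ 2)^-1)) /=.
  by rewrite /c /u; field; rewrite ab_neq0 gt_eqF.
have -> : series (fun i => c * (i.+1%:R * u ^+ i)) =
    (fun n => c * series (fun i => i.+1%:R * u ^+ i) n).
  by apply: boolp.funext => n; rewrite /series /= mulr_sumr.
by apply: cvgM; [exact: cvg_cst | exact: cvg_series_succ_expr].
Qed.

End Geometric.

Section ReversedEnvironment.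
Context {R : realType}.

Variables a b : nat -> R.
Hypothesis env : LF_env a b.

Let Pi_pos n : 0 < Pi a n. Proof. by apply: Pi_gt0 => k /env[]. Qed.
Let Pi_neq0 n : Pi a n != 0. Proof. by rewrite gt_eqF. Qed.
Let Rinv1_neq0 n : 1 + Rinv a b n != 0.
Proof. by rewrite gt_eqF // ltr_pwDl ?Rinv_ge0. Qed.
Let PiRinv_neq0 n : Pi a n + Pi a n * Rinv a b n != 0.
Proof. by rewrite -[X in X + _]mulr1 -mulrDr mulf_neq0. Qed.

Lemma surv_revE n : surv_rev a b n = (Pi a n * (1 + Rinv a b n))^-1.
Proof.
by rewrite /surv_rev law_revE // LF0; field; rewrite ?PiRinv_neq0 ?Pi_neq0 ?Rinv1_neq0.
Qed.

Lemma Pi_surv_revE n : Pi a n * surv_rev a b n = (1 + Rinv a b n)^-1.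
Proof. by rewrite surv_revE invfM mulVKf. Qed.

Lemma condmean_revE n : condmean_rev a b n = 1 + Rinv a b n.
Proof.
rewrite /condmean_rev law_revE // LF_mean ?Pi_Rinv_ge1 //; last first.
  by rewrite mulr_ge0 ?Rinv_ge0 // ltW.
by rewrite surv_revE; field; rewrite Pi_neq0 Rinv1_neq0.
Qed.

Lemma condlaw_revE n : condlaw_rev a b n = geomP (1 + Rinv a b n)^-1.
Proof.
apply: boolp.funext => -[|j] //.
rewrite /condlaw_rev /geomP /= law_revE // LFS // surv_revE.
have -> : Pi a n * Rinv a b n / (Pi a n + Pi a n * Rinv a b n) = 1 - (1 + Rinv a b n)^-1.
  by field; rewrite ?PiRinv_neq0 ?Pi_neq0 ?Rinv1_neq0.
by field; rewrite ?PiRinv_neq0 ?Pi_neq0 ?Rinv1_neq0.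
Qed.

End ReversedEnvironment.

Lemma LF_rev_limits {R : realType} (a b : nat -> R) : LF_env a b -> cvgn (Rinv a b) ->
  (forall n, Pi a n * surv_rev a b n = (condmean_rev a b n)^-1) /\
  (fun n => Pi a n * surv_rev a b n) @ \oo --> (1 + Rinv_inf a b)^-1 /\
  (fun n => tv (condlaw_rev a b n) (geomP (1 + Rinv_inf a b)^-1)) @ \oo --> 0%E.
Proof.
move=> env Rinv_cvg.
have inv01 (x : R) : 0 <= x -> 0 < (1 + x)^-1 <= 1.
  move=> x_ge0; have x1_gt0 : 0 < 1 + x by rewrite ltr_pwDl.
  by rewrite invr_gt0 x1_gt0 /= invf_le1 // lerDl.
have Rinv_inf_ge0 : 0 <= Rinv_inf a b.
  by apply: limr_ge => //; apply: nearW => n; exact: Rinv_ge0.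
have surv_cvg : (fun n => (1 + Rinv a b n)^-1) @ \oo --> (1 + Rinv_inf a b)^-1.
  by apply: cvgV; [rewrite gt_eqF ?ltr_pwDl | exact: cvgD (cvg_cst _) Rinv_cvg].
split; first by move=> n; rewrite Pi_surv_revE // condmean_revE.
split; first by under eq_fun do rewrite Pi_surv_revE //.
under eq_fun do rewrite condlaw_revE //.
by apply: cvg_tv_geomP => [n||]; rewrite ?inv01 ?Rinv_ge0.
Qed.

Lemma measurable_LF_params {R : realType} :
  measurable [set z : R * R | 0 < z.1 /\ 0 < z.2 /\ 1 <= z.1 + z.2].
Proof.
have -> : [set z : R * R | 0 < z.1 /\ 0 < z.2 /\ 1 <= z.1 + z.2] =
  (`]0, +oo[%classic `*` `]0, +oo[%classic) `&`
  ((fun z : R * R => z.1 + z.2) @^-1` `[1, +oo[).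
  apply/seteqP; split => z /=.
    by move=> [z1 [z2 z12]]; rewrite !in_itv /= z1 z2 z12.
  by rewrite !in_itv /= !andbT => -[[z1 z2] z12].
apply: measurableI; first by apply: measurableX; exact: measurable_itv.
rewrite -[X in measurable X]setTI.
exact: (@measurable_realfun.measurable_funD _ _ _ setT fst snd).
Qed.

Lemma ae_LF_env (d : measure_display) (T : measurableType d) (R : realType)
  (P : probability T R) (A B : nat -> T -> R) :
  iid_seq P (fun n w => (A n w, B n w)) ->
  {ae P, forall w, 0 < A 1%N w /\ 0 < B 1%N w /\ 1 <= A 1%N w + B 1%N w} ->
  {ae P, forall w, LF_env (A ^~ w) (B ^~ w)}.
Proof.
move=> [e_meas [e_ident _]] [N [mN PN0 N_bad]].
set S := [set z : R * R | 0 < z.1 /\ 0 < z.2 /\ 1 <= z.1 + z.2].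
have mSC : measurable (~` S : set (R * R)).
  by apply: measurableC; exact: measurable_LF_params.
suff ae_n : forall n,
    {ae P, forall w, (0 < n)%N -> 0 < A n w /\ 0 < B n w /\ 1 <= A n w + B n w}.
  apply: filterS (ae_foralln ae_n) => w env k /env[? [? ?]].
  by split => //; exact: ltW.
move=> n.
have [n_gt0|n_le0] := ltnP 0 n; last by apply: nearW.
exists ((fun w => (A n w, B n w)) @^-1` (~` S)); split.
- by rewrite -[X in measurable X]setTI; exact: e_meas.
- rewrite (e_ident n _ n_gt0 mSC); apply/eqP; rewrite eq_le measure_ge0 andbT -PN0.
  apply: le_measure; rewrite ?inE //.
  by rewrite -[X in measurable X]setTI; exact: e_meas.
- by move=> w /= w_bad good_n; apply: w_bad => _; exact: good_n.
Qed.

Theorem theorem3p1 (d : measure_display) (T : measurableType d) (R : realType)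
  (P : probability T R) (A B : nat -> T -> R) :
  iid_seq P (fun n w => (A n w, B n w)) ->
  {ae P, forall w, 0 < A 1%N w /\ 0 < B 1%N w /\ 1 <= A 1%N w + B 1%N w} ->
  {ae P, forall w, cvgn (Rinv (A ^~ w) (B ^~ w))} ->
  {ae P, forall w, Rn (A ^~ w) (B ^~ w) @ \oo --> +oo} ->
  {ae P, forall w,
     (forall n,
        Pi (A ^~ w) n * surv_rev (A ^~ w) (B ^~ w) n
        = (condmean_rev (A ^~ w) (B ^~ w) n)^-1) /\
     (fun n => Pi (A ^~ w) n * surv_rev (A ^~ w) (B ^~ w) n) @ \oo
        --> (1 + Rinv_inf (A ^~ w) (B ^~ w))^-1 /\
     (fun n => tv (condlaw_rev (A ^~ w) (B ^~ w) n)
                  (geomP (1 + Rinv_inf (A ^~ w) (B ^~ w))^-1)) @ \oo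
        --> 0%E}.
Proof.
move=> iid good Rinv_cvg _.
apply: (filterS2 _ _ (ae_LF_env iid good) Rinv_cvg) => w env_w Rinv_cvg_w.
exact: LF_rev_limits.
Qed.
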